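(* Assume $b,f,g$ are bounded and uniformly continuous in all variables, and that $\mathbb H$ is $L$-separable for some $L\ge0$. Then $\mathbb H$ is Lipschitz continuous in $z$ with Lipschitz constant $L$: $d(\mathbb H(t,x,z_1),\mathbb H(t,x,z_2))\le L|z_1-z_2|$ for all $t\in[0,T]$, $x\in\mathbb R^d$, $z_1,z_2\in\mathbb R^{dN}$.
   Context: Fix integers $d,N\ge 1$ and $T>0$. For $i=1,\dots,N$, $A_i$ is a domain in some Euclidean space and $A:=A_1\times\cdots\times A_N$; $(a^{-i},\tilde a_i)$ denotes $a$ with $i$-th component replaced by $\tilde a_i$. Data: $b:[0,T]\times\mathbb R^d\times A\to\mathbb R^d$, $f:[0,T]\times\mathbb R^d\times A\to\mathbb R^N$, $g:\mathbb R^d\to\mathbb R^N$. Let $\mathbb X:=[0,T]\times\mathbb R^d\times\mathbb R^{dN}$, $\theta=(t,x,z)$, $z=(z^1,\dots,z^N)$, $z^i\in\mathbb R^d$, $\theta^i:=(t,x,z^i)$; $h_i(t,x,z^i,a):=f_i(t,x,a)+b(t,x,a)\cdot z^i$, $h(\theta,a):=(h_i(\theta^i,a))_i$. For $\varepsilon>0$, $\mathcal E_\varepsilon(\theta)$ is the set of $a\in A$ with $h_i(\theta^i,a)\ge h_i(\theta^i,(a^{-i},\tilde a_i))-\varepsilon$ for all $i$, $\tilde a_i\in A_i$; $\mathbb H_\varepsilon(\theta):=\{y\in\mathbb R^N:|y-h(\theta,a)|<\varepsilon$ for some $a\in\mathcal E_\varepsilon(\theta)\}$, $\mathbb H(\theta):=\bigcap_{\varepsilon>0}\mathbb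 H_\varepsilon(\theta)$. $d$ is the Hausdorff distance $d(\mathbb H_1,\mathbb H_2)=[\sup_{y_1\in\mathbb H_1}d(y_1,\mathbb H_2)]\vee[\sup_{y_2\in\mathbb H_2}d(y_2,\mathbb H_1)]$, $d(y,\mathbb H'):=\inf_{y'\in\mathbb H'}|y-y'|$. $\mathbb H$ is $L$-separable if there exist $H^n:\mathbb X\to\mathbb R^N$, $n\ge1$, with $\mathbb H(\theta)=\mathrm{cl}\{H^n(\theta):n\ge1\}$ for all $\theta$, each $H^n$ measurable in $(t,x)$ and uniformly Lipschitz in $z$ with common constant $L$. *)

From HB Require Import structures.
From mathcomp Require Import all_boot all_order all_algebra.
From mathcomp Require Import all_classical all_reals all_analysis.
Set Implicit Arguments. Unset Strict Implicit. Unset Printing Implicit Defensive.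
Import Order.TTheory GRing.Theory Num.Theory.
Import numFieldNormedType.Exports.
Local Open Scope classical_set_scope.
Local Open Scope ring_scope.

(* Euclidean norm on matrices / row vectors (R^n = 'rV[R]_n, R^{dN} = 'M[R]_(N,d)). *)
Definition enorm (R : realType) (m n : nat) (M : 'M[R]_(m, n)) : R :=
  Num.sqrt (\sum_(i < m) \sum_(j < n) M i j ^+ 2).

Definition dotv (R : realType) (n : nat) (u v : 'rV[R]_n) : R :=
  \sum_(j < n) u 0 j * v 0 j.

Definition profile (R : realType) (N : nat) (k : 'I_N -> nat) : Type :=
  forall i : 'I_N, 'rV[R]_(k i).

Definition in_A (R : realType) (N : nat) (k : 'I_N -> nat)
  (A : forall i : 'I_N, set 'rV[R]_(k i)) (a : profile R k) : Prop :=
  forall i, A i (a i).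

Definition pdist (R : realType) (N : nat) (k : 'I_N -> nat) (a a' : profile R k) : R :=
  Num.sqrt (\sum_(i < N) enorm (a i - a' i) ^+ 2).

Definition repl (R : realType) (N : nat) (k : 'I_N -> nat) (a : profile R k)
  (i : 'I_N) (ai : 'rV[R]_(k i)) : profile R k :=
  @eqtype.dfwith _ (fun j => 'rV[R]_(k j)) a i ai.

Definition domain (R : realType) (n : nat) (D : set 'rV[R]_n) : Prop :=
  D !=set0 /\ open D /\ connected D.

Definition hvec (R : realType) (d N : nat) (k : 'I_N -> nat)
  (b : R -> 'rV[R]_d -> profile R k -> 'rV[R]_d)
  (f : R -> 'rV[R]_d -> profile R k -> 'rV[R]_N)
  (t : R) (x : 'rV[R]_d) (z : 'M[R]_(N, d)) (a : profile R k) : 'rV[R]_N :=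
  \row_(i < N) (f t x a 0 i + dotv (b t x a) (row i z)).

Definition Eeps (R : realType) (d N : nat) (k : 'I_N -> nat)
  (A : forall i : 'I_N, set 'rV[R]_(k i))
  (b : R -> 'rV[R]_d -> profile R k -> 'rV[R]_d)
  (f : R -> 'rV[R]_d -> profile R k -> 'rV[R]_N)
  (eps t : R) (x : 'rV[R]_d) (z : 'M[R]_(N, d)) : set (profile R k) :=
  [set a | in_A A a /\
     forall (i : 'I_N) (ai : 'rV[R]_(k i)), A i ai ->
       hvec b f t x z a 0 i >= hvec b f t x z (repl a ai) 0 i - eps].

Definition Heps (R : realType) (d N : nat) (k : 'I_N -> nat)
  (A : forall i : 'I_N, set 'rV[R]_(k i))
  (b : R -> 'rV[R]_d -> profile R k -> 'rV[R]_d)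
  (f : R -> 'rV[R]_d -> profile R k -> 'rV[R]_N)
  (eps t : R) (x : 'rV[R]_d) (z : 'M[R]_(N, d)) : set 'rV[R]_N :=
  [set y | exists2 a, Eeps A b f eps t x z a & enorm (y - hvec b f t x z a) < eps].

Definition Hset (R : realType) (d N : nat) (k : 'I_N -> nat)
  (A : forall i : 'I_N, set 'rV[R]_(k i))
  (b : R -> 'rV[R]_d -> profile R k -> 'rV[R]_d)
  (f : R -> 'rV[R]_d -> profile R k -> 'rV[R]_N)
  (t : R) (x : 'rV[R]_d) (z : 'M[R]_(N, d)) : set 'rV[R]_N :=
  [set y | forall eps : R, 0 < eps -> Heps A b f eps t x z y].

(* d(y, H') = inf_{y' in H'} |y - y'|  (extended real; inf of empty = +oo) *)
Definition point_dist (R : realType) (N : nat) (y : 'rV[R]_N) (H' : set 'rV[R]_N)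
  : \bar R :=
  ereal_inf [set (enorm (y - y'))%:E | y' in H'].

Definition hausdorff (R : realType) (N : nat) (H1 H2 : set 'rV[R]_N) : \bar R :=
  maxe (ereal_sup [set point_dist y1 H2 | y1 in H1])
       (ereal_sup [set point_dist y2 H1 | y2 in H2]).

Definition borel_measurable_tx (R : realType) (d N : nat) (T : R)
  (F : R -> 'rV[R]_d -> 'rV[R]_N) : Prop :=
  forall U : set 'rV[R]_N, open U ->
    <<s [set O : set (R * 'rV[R]_d)%type | open O] >>
      [set p : R * 'rV[R]_d | 0 <= p.1 <= T /\ U (F p.1 p.2)].

Definition L_separable (R : realType) (d N : nat) (k : 'I_N -> nat) (T : R)
  (A : forall i : 'I_N, set 'rV[R]_(k i))
  (b : R -> 'rV[R]_d -> profile R k -> 'rV[R]_d)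
  (f : R -> 'rV[R]_d -> profile R k -> 'rV[R]_N) (L : R) : Prop :=
  exists Hn : nat -> R -> 'rV[R]_d -> 'M[R]_(N, d) -> 'rV[R]_N,
    [/\ forall t x z, 0 <= t <= T ->
          Hset A b f t x z = closure (range (fun n => Hn n t x z)),
        forall n z, borel_measurable_tx T (fun t x => Hn n t x z) &
        forall n t x z1 z2, 0 <= t <= T ->
          enorm (Hn n t x z1 - Hn n t x z2) <= L * enorm (z1 - z2)].

Definition bounded_on_TXA (R : realType) (d N m : nat) (k : 'I_N -> nat) (T : R)
  (A : forall i : 'I_N, set 'rV[R]_(k i))
  (F : R -> 'rV[R]_d -> profile R k -> 'rV[R]_m) : Prop :=
  exists M : R, forall t x a, 0 <= t <= T -> in_A A a -> enorm (F t x a) <= M.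

Definition unif_cont_on_TXA (R : realType) (d N m : nat) (k : 'I_N -> nat) (T : R)
  (A : forall i : 'I_N, set 'rV[R]_(k i))
  (F : R -> 'rV[R]_d -> profile R k -> 'rV[R]_m) : Prop :=
  forall eps : R, 0 < eps -> exists2 delta : R, 0 < delta &
    forall t x a t' x' a', 0 <= t <= T -> 0 <= t' <= T -> in_A A a -> in_A A a' ->
      Num.sqrt ((t - t') ^+ 2 + enorm (x - x') ^+ 2 + pdist a a' ^+ 2) < delta ->
      enorm (F t x a - F t' x' a') < eps.

Definition bounded_Rd (R : realType) (d m : nat) (g : 'rV[R]_d -> 'rV[R]_m) : Prop :=
  exists M : R, forall x, enorm (g x) <= M.

Definition unif_cont_Rd (R : realType) (d m : nat) (g : 'rV[R]_d -> 'rV[R]_m) : Prop :=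
  forall eps : R, 0 < eps -> exists2 delta : R, 0 < delta &
    forall x x', enorm (x - x') < delta -> enorm (g x - g x') < eps.

(* Each H(t,x,z) is the closure of the sequence H^n(t,x,z), and the H^n are
   L-Lipschitz in z.  A point y of H(t,x,z1) is therefore within e of some
   H^n(t,x,z1), which lies within L|z1 - z2| of H^n(t,x,z2), a point of
   H(t,x,z2); letting e -> 0 bounds both halves of the Hausdorff distance.
   Only the Euclidean triangle inequality is needed besides this. *)
From HB Require Import structures.
From mathcomp Require Import all_boot all_order all_algebra.
From mathcomp Require Import all_classical all_reals all_analysis.
From mathcomp Require Import ring.
Import Order.TTheory GRing.Theory Num.Theory.
Import numFieldNormedType.Exports.
Local Open Scope classical_set_scope.
Local Open Scope ring_scope.

Lemma lagrange_identity (R : comPzRingType) (I : finType) (u v : I -> R) :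
  \sum_i \sum_j (u i * v j - u j * v i) ^+ 2 =
  ((\sum_i u i ^+ 2) * (\sum_i v i ^+ 2) - (\sum_i u i * v i) ^+ 2) *+ 2.
Proof.
have expand i j : (u i * v j - u j * v i) ^+ 2 =
    u i ^+ 2 * v j ^+ 2 + u j ^+ 2 * v i ^+ 2 - (u i * v i) * (u j * v j) *+ 2.
  by ring.
under eq_bigr do under eq_bigr do rewrite expand.
rewrite expr2 !big_distrlr /=.
under eq_bigr do rewrite sumrB big_split /=.
rewrite sumrB big_split /= [X in _ + X - _]exchange_big /=.
rewrite mulrnBl -mulr2n; congr (_ - _); rewrite -sumrMnl.
by apply: eq_bigr => i _; rewrite -sumrMnl.
Qed.

Lemma cauchy_schwarz_sum (R : realDomainType) (I : finType) (u v : I -> R) :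
  (\sum_i u i * v i) ^+ 2 <= (\sum_i u i ^+ 2) * (\sum_i v i ^+ 2).
Proof.
rewrite -subr_ge0 -(pmulrn_lge0 _ (ltn0Sn 1)) -lagrange_identity.
by apply: sumr_ge0 => i _; apply: sumr_ge0 => j _; exact: sqr_ge0.
Qed.

Section EuclideanNorm.
Context {R : realType} {m n : nat}.
Implicit Types (M u v : 'M[R]_(m, n)).

Lemma enorm_ge0 M : 0 <= enorm M.
Proof. exact: sqrtr_ge0. Qed.

Lemma enormN M : enorm (- M) = enorm M.
Proof.
by congr Num.sqrt; apply: eq_bigr => i _; apply: eq_bigr => j _; rewrite mxE sqrrN.
Qed.

Lemma enorm_sqr M : enorm M ^+ 2 = \sum_(p : 'I_m * 'I_n) M p.1 p.2 ^+ 2.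
Proof.
rewrite /enorm pair_bigA sqr_sqrtr //.
by apply: sumr_ge0 => p _; exact: sqr_ge0.
Qed.

Lemma ler_enormD u v : enorm (u + v) <= enorm u + enorm v.
Proof.
have cs : \sum_(p : 'I_m * 'I_n) u p.1 p.2 * v p.1 p.2 <= enorm u * enorm v.
  apply: le_trans (ler_norm _) _.
  rewrite -(ler_pXn2r (ltn0Sn 1)) ?nnegrE ?mulr_ge0 ?enorm_ge0 //.
  by rewrite real_normK ?num_real // exprMn !enorm_sqr cauchy_schwarz_sum.
rewrite -(ler_pXn2r (ltn0Sn 1)) ?nnegrE ?addr_ge0 ?enorm_ge0 //.
rewrite sqrrD !enorm_sqr.
under eq_bigr do rewrite mxE sqrrD.
by rewrite !big_split /= lerD2r lerD2l mulr2n lerD.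
Qed.

Lemma enorm_le_entrywise {M} {e : R} :
  0 <= e -> (forall i j, `|M i j| <= e) -> enorm M <= Num.sqrt (m * n)%:R * e.
Proof.
move=> e0 Me; rewrite -(ger0_norm e0) -sqrtr_sqr -sqrtrM // ler_sqrt; last first.
  by rewrite mulr_ge0 // sqr_ge0.
rewrite pair_bigA; apply: le_trans (_ : _ <= \sum_(p : 'I_m * 'I_n) e ^+ 2) _.
  apply: ler_sum => p _.
  by rewrite -real_normK ?num_real // lerXn2r ?nnegrE.
by rewrite sumr_const card_prod !card_ord mulr_natl.
Qed.

(* [closure] is taken in the product (max-norm) topology of matrices. *)
Lemma closure_enorm_approx {S : set 'M[R]_(m, n)} {y} {e : R} :
  closure S y -> 0 < e -> exists2 s, S s & enorm (y - s) < e.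
Proof.
move=> clSy e0; pose c : R := Num.sqrt (m * n)%:R + 1.
have c0 : 0 < c by rewrite ltr_wpDl ?sqrtr_ge0.
have e'0 : 0 < e / c by rewrite divr_gt0.
have [s [Ss [_ ys]]] := clSy _ (nbhsx_ballx y _ e'0).
exists s => //.
have ys_le i j : `|(y - s) i j| <= e / c by apply: ltW; have := ys i j; rewrite !mxE.
apply: le_lt_trans (enorm_le_entrywise (ltW e'0) ys_le) _.
by rewrite -[ltRHS](@divfK _ c) ?gt_eqF // [ltRHS]mulrC ltr_pM2r // ltrDl.
Qed.

End EuclideanNorm.

Section PointSetDistance.
Context {R : realType} {N : nat}.

Lemma point_dist_le (y : 'rV[R]_N) (H : set 'rV[R]_N) (c : R) :
  (forall e, 0 < e -> exists2 y', H y' & enorm (y - y') <= c + e) ->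
  (point_dist y H <= c%:E)%E.
Proof.
move=> near_y; apply/lee_addgt0Pr => e e0; have [y' Hy' yy'] := near_y e e0.
by apply: ge_ereal_inf; exists (enorm (y - y'))%:E; [exists y' | rewrite -EFinD lee_fin].
Qed.

Lemma point_dist_closure_range_le (F G : nat -> 'rV[R]_N) (c : R) y :
  (forall k, enorm (F k - G k) <= c) -> closure (range F) y ->
  (point_dist y (closure (range G)) <= c%:E)%E.
Proof.
move=> FG clFy; apply: point_dist_le => e e0.
have [_ [k _ <-] yFk] := closure_enorm_approx clFy e0.
exists (G k); first by apply: subset_closure; exists k.
rewrite -(subrK (F k) y) -addrA addrC.
by apply: le_trans (ler_enormD _ _) _; rewrite lerD // ltW.
Qed.

Lemma hausdorff_closure_range_le (F G : nat -> 'rV[R]_N) (c : R) :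
  (forall k, enorm (F k - G k) <= c) ->
  (hausdorff (closure (range F)) (closure (range G)) <= c%:E)%E.
Proof.
move=> FG; rewrite /hausdorff ge_max.
apply/andP; split; apply: ge_ereal_sup => _ [y cly <-];
  apply: point_dist_closure_range_le cly => k //.
by rewrite -opprB enormN.
Qed.

End PointSetDistance.

Theorem proposition4p11 (R : realType) (d N : nat) (T : R)
  (k : 'I_N -> nat) (A : forall i : 'I_N, set 'rV[R]_(k i))
  (b : R -> 'rV[R]_d -> profile R k -> 'rV[R]_d)
  (f : R -> 'rV[R]_d -> profile R k -> 'rV[R]_N)
  (g : 'rV[R]_d -> 'rV[R]_N) (L : R) :
  (1 <= d)%N -> (1 <= N)%N -> 0 < T ->
  (forall i, domain (A i)) ->
  bounded_on_TXA T A b -> unif_cont_on_TXA T A b ->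
  bounded_on_TXA T A f -> unif_cont_on_TXA T A f ->
  bounded_Rd g -> unif_cont_Rd g ->
  0 <= L -> L_separable T A b f L ->
  forall (t : R) (x : 'rV[R]_d) (z1 z2 : 'M[R]_(N, d)), 0 <= t <= T ->
    (hausdorff (Hset A b f t x z1) (Hset A b f t x z2) <= (L * enorm (z1 - z2))%:E)%E.
Proof.
move=> _ _ _ _ _ _ _ _ _ _ _ [H [H_closure _ H_lipschitz]] t x z1 z2 t_in.
rewrite !H_closure //; apply: hausdorff_closure_range_le => n.
exact: H_lipschitz.
Qed.
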